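(* Let $M,N$ be $\lambda$-terms. (1) $M\simeq_\beta N$ iff $M^n\simeq_v N^n$ iff $M^n\simeq_b N^n$. (2) $M$ is $\beta$-normal iff $M^n$ is $v$-normal iff $M^n$ is $b$-normal; and $M$ is $w\beta$-normal iff $M^n$ is $wv$-normal iff $M^n$ is $wb$-normal.
   Context: Bang calculus. The set $!\Lambda$ of terms is $T,S,R ::= x \mid \lambda x.T \mid T\,S \mid \mathrm{der}\,T \mid\ !T$; $\lambda$ the only binder, up to $\alpha$-conversion, $T\{S/x\}$ capture-avoiding substitution. Contexts: $C ::= [\cdot] \mid \lambda x.C \mid C\,T \mid T\,C \mid \mathrm{der}\,C \mid\ !C$; ground contexts: $W ::= [\cdot] \mid \lambda x.W \mid W\,T \mid T\,W \mid \mathrm{der}\,W$. Root steps: $(\lambda x.T)(!S)\mapsto_v T\{S/x\}$, $\mathrm{der}(!T)\mapsto_d T$, $\mapsto_b\,=\,\mapsto_v\cup\mapsto_d$. For $r\in\{v,d,b\}$, $\to_r$ is the closure of $\mapsto_r$ under contexts and $\to_{wr}$ its closure under ground contexts. $\lambda$-calculus: $M,N ::= x\mid\lambda x.M\mid MN$; $\to_\beta$ is the closure of $(\lambda x.M)N\mapsto_\beta M\{N/x\}$ under all $\lambda$-contexts $C ::= [\cdot]\mid \lambda x.C\mid C\,M\mid M\,C$, and $\to_{w\beta}$ its closure under CbN ground contexts $N ::= [\cdot]\mid\lambda x.N\mid N\,M$. CbN translation: $x^n=x$, $(\lambda x.M)^n=\lambda x.M^n$, $(MN)^n=M^n\,(!N^n)$.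 For a relation $\to_r$: $\simeq_r$ is its reflexive-symmetric-transitive closure; a term is $r$-normal if it has no $\to_r$-successor. *)

(* Terms are represented with de Bruijn indices, so that
   alpha-conversion is built in; substitution is capture-avoiding
   parallel substitution (sigma-calculus style). *)
From Stdlib Require Import Relations.

Inductive lterm : Type :=
| lvar : nat -> lterm
| llam : lterm -> lterm
| lapp : lterm -> lterm -> lterm.

Definition upren (xi : nat -> nat) : nat -> nat :=
  fun n => match n with 0 => 0 | S m => S (xi m) end.

Fixpoint lren (xi : nat -> nat) (M : lterm) : lterm :=
  match M with
  | lvar n => lvar (xi n)
  | llam M => llam (lren (upren xi) M)
  | lapp M N => lapp (lren xi M) (lren xi N)
  end.

Definition lup (s : nat -> lterm) : nat -> lterm :=
  fun n => match n with 0 => lvar 0 | S m => lren S (s m) end.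

Fixpoint lsubst (s : nat -> lterm) (M : lterm) : lterm :=
  match M with
  | lvar n => s n
  | llam M => llam (lsubst (lup s) M)
  | lapp M N => lapp (lsubst s M) (lsubst s N)
  end.

(* M{N/x}, x being the variable bound by the outer lambda (index 0) *)
Definition lsubst1 (N : lterm) (M : lterm) : lterm :=
  lsubst (fun n => match n with 0 => N | S m => lvar m end) M.

Inductive beta : lterm -> lterm -> Prop :=
| beta_root M N : beta (lapp (llam M) N) (lsubst1 N M)
| beta_lam M M' : beta M M' -> beta (llam M) (llam M')
| beta_appl M M' N : beta M M' -> beta (lapp M N) (lapp M' N)
| beta_appr M N N' : beta N N' -> beta (lapp M N) (lapp M N').

Inductive wbeta : lterm -> lterm -> Prop :=
| wbeta_root M N : wbeta (lapp (llam M) N) (lsubst1 N M)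
| wbeta_lam M M' : wbeta M M' -> wbeta (llam M) (llam M')
| wbeta_appl M M' N : wbeta M M' -> wbeta (lapp M N) (lapp M' N).

Inductive bterm : Type :=
| bvar : nat -> bterm
| blam : bterm -> bterm
| bapp : bterm -> bterm -> bterm
| bder : bterm -> bterm
| bbang : bterm -> bterm.

Fixpoint bren (xi : nat -> nat) (T : bterm) : bterm :=
  match T with
  | bvar n => bvar (xi n)
  | blam T => blam (bren (upren xi) T)
  | bapp T Q => bapp (bren xi T) (bren xi Q)
  | bder T => bder (bren xi T)
  | bbang T => bbang (bren xi T)
  end.

Definition bup (s : nat -> bterm) : nat -> bterm :=
  fun n => match n with 0 => bvar 0 | S m => bren S (s m) end.

Fixpoint bsubst (s : nat -> bterm) (T : bterm) : bterm :=
  match T with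
  | bvar n => s n
  | blam T => blam (bsubst (bup s) T)
  | bapp T Q => bapp (bsubst s T) (bsubst s Q)
  | bder T => bder (bsubst s T)
  | bbang T => bbang (bsubst s T)
  end.

Definition bsubst1 (Q : bterm) (T : bterm) : bterm :=
  bsubst (fun n => match n with 0 => Q | S m => bvar m end) T.

Inductive root_v : bterm -> bterm -> Prop :=
| root_v_intro T Q : root_v (bapp (blam T) (bbang Q)) (bsubst1 Q T).
Inductive root_d : bterm -> bterm -> Prop :=
| root_d_intro T : root_d (bder (bbang T)) T.
Definition root_b (T T' : bterm) : Prop := root_v T T' \/ root_d T T'.

Inductive bstep (r : bterm -> bterm -> Prop) : bterm -> bterm -> Prop :=
| bstep_root T T' : r T T' -> bstep r T T'
| bstep_lam T T' : bstep r T T' -> bstep r (blam T) (blam T')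
| bstep_appl T T' Q : bstep r T T' -> bstep r (bapp T Q) (bapp T' Q)
| bstep_appr T Q R2 : bstep r Q R2 -> bstep r (bapp T Q) (bapp T R2)
| bstep_der T T' : bstep r T T' -> bstep r (bder T) (bder T')
| bstep_bang T T' : bstep r T T' -> bstep r (bbang T) (bbang T').

Inductive bwstep (r : bterm -> bterm -> Prop) : bterm -> bterm -> Prop :=
| bwstep_root T T' : r T T' -> bwstep r T T'
| bwstep_lam T T' : bwstep r T T' -> bwstep r (blam T) (blam T')
| bwstep_appl T T' Q : bwstep r T T' -> bwstep r (bapp T Q) (bapp T' Q)
| bwstep_appr T Q R2 : bwstep r Q R2 -> bwstep r (bapp T Q) (bapp T R2)
| bwstep_der T T' : bwstep r T T' -> bwstep r (bder T) (bder T').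

Definition step_v := bstep root_v.
Definition step_d := bstep root_d.
Definition step_b := bstep root_b.
Definition step_wv := bwstep root_v.
Definition step_wb := bwstep root_b.

Definition conv {A : Type} (R : relation A) : relation A := clos_refl_sym_trans A R.
Definition normal {A : Type} (R : relation A) (t : A) : Prop := forall t', ~ R t t'.

Fixpoint cbn (M : lterm) : bterm :=
  match M with
  | lvar n => bvar n
  | llam M => blam (cbn M)
  | lapp M N => bapp (cbn M) (bbang (cbn N))
  end.

(* The CbN translation is a strict simulation of beta by v: a beta-redex
   (\x.M) N becomes the v-redex (\x.M^n) (!N^n), and the translation commutes
   with substitution.  Conversely, the image of the translation contains no
   d-redex, and each of its v-redexes sits where M has a beta-redex, so normal
   forms correspond.  For conversion, the erasure of der and ! is a left
   inverse of the translation which maps every b-step to a beta-conversion. *)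
From Stdlib Require Import Relations.

Section Closures.

Context {A B : Type}.

Lemma conv_map_conv (R : relation A) (R' : relation B) (f : A -> B) :
  (forall x y, R x y -> conv R' (f x) (f y)) ->
  forall x y, conv R x y -> conv R' (f x) (f y).
Proof.
  intros Hf x y Hxy; induction Hxy.
  - now apply Hf.
  - apply rst_refl.
  - now apply rst_sym.
  - eapply rst_trans; eassumption.
Qed.

Lemma conv_map (R : relation A) (R' : relation B) (f : A -> B) :
  (forall x y, R x y -> R' (f x) (f y)) ->
  forall x y, conv R x y -> conv R' (f x) (f y).
Proof. intros Hf; apply conv_map_conv; intros x y Hxy; now apply rst_step, Hf. Qed.

Lemma normal_map_iff (R : relation A) (R' : relation B) (f : A -> B) :
  (forall x y, R x y -> R' (f x) (f y)) ->
  (forall x t, R' (f x) t -> exists y, R x y) ->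
  forall x, normal R x <-> normal R' (f x).
Proof.
  intros Hsim Hrefl x; split.
  - intros Hx t Ht; destruct (Hrefl x t Ht) as [y Hy]; exact (Hx y Hy).
  - intros Hfx y Hy; exact (Hfx _ (Hsim x y Hy)).
Qed.

End Closures.

Lemma bstep_mono (r r' : relation bterm) :
  (forall T T', r T T' -> r' T T') -> forall T T', bstep r T T' -> bstep r' T T'.
Proof. intros Hr T T' H; induction H; solve [constructor; auto]. Qed.

Lemma bwstep_mono (r r' : relation bterm) :
  (forall T T', r T T' -> r' T T') -> forall T T', bwstep r T T' -> bwstep r' T T'.
Proof. intros Hr T T' H; induction H; solve [constructor; auto]. Qed.

Lemma step_v_b T T' : step_v T T' -> step_b T T'.
Proof. apply bstep_mono; now left. Qed.

Lemma step_wv_wb T T' : step_wv T T' -> step_wb T T'.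
Proof. apply bwstep_mono; now left. Qed.

Lemma cbn_ren M xi : cbn (lren xi M) = bren xi (cbn M).
Proof. revert xi; induction M; intros; simpl; congruence. Qed.

Lemma cbn_subst M s s' : (forall n, s' n = cbn (s n)) ->
  cbn (lsubst s M) = bsubst s' (cbn M).
Proof.
  revert s s'; induction M; intros s s' Hs; simpl.
  - now rewrite Hs.
  - f_equal; apply IHM; intros [|n]; simpl; [reflexivity|].
    now rewrite Hs, cbn_ren.
  - now rewrite (IHM1 s s' Hs), (IHM2 s s' Hs).
Qed.

Lemma cbn_subst1 N M : cbn (lsubst1 N M) = bsubst1 (cbn N) (cbn M).
Proof. apply cbn_subst; now intros [|n]. Qed.

Lemma cbn_beta M M' : beta M M' -> step_v (cbn M) (cbn M').
Proof.
  induction 1; simpl.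
  - rewrite cbn_subst1; now do 2 constructor.
  - now apply bstep_lam.
  - now apply bstep_appl.
  - now apply bstep_appr, bstep_bang.
Qed.

Lemma cbn_wbeta M M' : wbeta M M' -> step_wv (cbn M) (cbn M').
Proof.
  induction 1; simpl.
  - rewrite cbn_subst1; now do 2 constructor.
  - now apply bwstep_lam.
  - now apply bwstep_appl.
Qed.

Lemma root_b_cbn_inv M T :
  root_b (cbn M) T -> exists M1 N, M = lapp (llam M1) N.
Proof. destruct M as [n|M|[| |] N]; intros [H|H]; inversion H; eauto. Qed.

Lemma step_b_cbn_inv M T : step_b (cbn M) T -> exists M', beta M M'.
Proof.
  revert T; induction M as [n|M IHM|M IHM N IHN]; intros T H;
    inversion H as [? ? Hr| ? ? H'| ? ? ? H'| ? ? ? H'| |]; subst;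
    try (destruct (root_b_cbn_inv _ _ Hr) as [M1 [N1 ->]]; eauto using beta).
  - destruct (IHM _ H') as [M' HM]; eauto using beta.
  - destruct (IHM _ H') as [M' HM]; eauto using beta.
  - inversion H' as [? ? [Hr|Hr]| | | | | ? ? HN]; subst; [inversion Hr ..|].
    destruct (IHN _ HN) as [N' HN']; eauto using beta.
Qed.

Lemma step_wb_cbn_inv M T : step_wb (cbn M) T -> exists M', wbeta M M'.
Proof.
  revert T; induction M as [n|M IHM|M IHM N IHN]; intros T H;
    inversion H as [? ? Hr| ? ? H'| ? ? ? H'| ? ? ? H'|]; subst;
    try (destruct (root_b_cbn_inv _ _ Hr) as [M1 [N1 ->]]; eauto using wbeta).
  - destruct (IHM _ H') as [M' HM]; eauto using wbeta.
  - destruct (IHM _ H') as [M' HM]; eauto using wbeta.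
  - inversion H' as [? ? [Hr|Hr]| | | |]; inversion Hr.
Qed.

Fixpoint erase (T : bterm) : lterm :=
  match T with
  | bvar n => lvar n
  | blam T => llam (erase T)
  | bapp T Q => lapp (erase T) (erase Q)
  | bder T => erase T
  | bbang T => erase T
  end.

Lemma erase_cbn M : erase (cbn M) = M.
Proof. induction M; simpl; congruence. Qed.

Lemma erase_ren T xi : erase (bren xi T) = lren xi (erase T).
Proof. revert xi; induction T; intros; simpl; congruence. Qed.

Lemma erase_subst T s s' : (forall n, s' n = erase (s n)) ->
  erase (bsubst s T) = lsubst s' (erase T).
Proof.
  revert s s'; induction T; intros s s' Hs; simpl.
  - now rewrite Hs.
  - f_equal; apply IHT; intros [|n]; simpl; [reflexivity|].
    now rewrite Hs, erase_ren.
  - now rewrite (IHT1 s s' Hs), (IHT2 s s' Hs).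
  - now apply IHT.
  - now apply IHT.
Qed.

Lemma erase_subst1 Q T : erase (bsubst1 Q T) = lsubst1 (erase Q) (erase T).
Proof. apply erase_subst; now intros [|n]. Qed.

Lemma erase_step_b T T' : step_b T T' -> conv beta (erase T) (erase T').
Proof.
  induction 1 as [T T' [Hr|Hr]| | | | |]; simpl; try assumption.
  - destruct Hr; rewrite erase_subst1; now do 2 constructor.
  - destruct Hr; apply rst_refl.
  - now apply (conv_map beta beta llam beta_lam).
  - now apply (conv_map beta beta (fun M => lapp M (erase Q)) (fun M M' H => beta_appl M M' _ H)).
  - now apply (conv_map beta beta (lapp (erase T)) (beta_appr (erase T))).
Qed.

Theorem mainTheorem8 (M N : lterm) :
  ((conv beta M N <-> conv step_v (cbn M) (cbn N)) /\
   (conv step_v (cbn M) (cbn N) <-> conv step_b (cbn M) (cbn N))) /\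
  ((normal beta M <-> normal step_v (cbn M)) /\
   (normal step_v (cbn M) <-> normal step_b (cbn M)) /\
   (normal wbeta M <-> normal step_wv (cbn M)) /\
   (normal step_wv (cbn M) <-> normal step_wb (cbn M))).
Proof.
  assert (beta_v : conv beta M N -> conv step_v (cbn M) (cbn N))
    by apply (conv_map _ _ cbn cbn_beta).
  assert (v_b : conv step_v (cbn M) (cbn N) -> conv step_b (cbn M) (cbn N))
    by apply (conv_map _ _ (fun T => T) step_v_b).
  assert (b_beta : conv step_b (cbn M) (cbn N) -> conv beta M N).
  { intros H; rewrite <- (erase_cbn M), <- (erase_cbn N).
    exact (conv_map_conv _ _ erase erase_step_b _ _ H). }
  assert (beta_nv : normal beta M <-> normal step_v (cbn M)).
  { apply normal_map_iff; [exact cbn_beta|].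
    intros x t Ht; exact (step_b_cbn_inv x t (step_v_b _ _ Ht)). }
  assert (beta_nb : normal beta M <-> normal step_b (cbn M)).
  { apply normal_map_iff; [|exact step_b_cbn_inv].
    intros x y Hxy; exact (step_v_b _ _ (cbn_beta x y Hxy)). }
  assert (wbeta_nwv : normal wbeta M <-> normal step_wv (cbn M)).
  { apply normal_map_iff; [exact cbn_wbeta|].
    intros x t Ht; exact (step_wb_cbn_inv x t (step_wv_wb _ _ Ht)). }
  assert (wbeta_nwb : normal wbeta M <-> normal step_wb (cbn M)).
  { apply normal_map_iff; [|exact step_wb_cbn_inv].
    intros x y Hxy; exact (step_wv_wb _ _ (cbn_wbeta x y Hxy)). }
  repeat split; tauto.
Qed.
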